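(* For every integer $\ell\geq 3$, the cycle $C_{2\ell+1}$ is not probe $P_5$-free, but it is probe $P_6$-free.
   Context: All graphs are finite and simple. $C_n$ is the cycle on $n$ vertices and $P_t$ the path on $t$ vertices. A graph is $H$-free if it contains no induced subgraph isomorphic to $H$. A graph $G=(V,E)$ is probe $H$-free if there is an independent set $N$ of $G$ and a set $F\subseteq\binom{N}{2}$ such that the graph $(V,E\cup F)$ is $H$-free. *)

From mathcomp Require Import all_boot.
Set Implicit Arguments. Unset Strict Implicit. Unset Printing Implicit Defensive.

(* A (simple) graph on a finite vertex type T is given by its adjacency
   relation e : rel T (symmetric, irreflexive). *)

Definition cycle_rel (n : nat) : rel 'I_n :=
  fun i j => ((i.+1 %% n) == j) || ((j.+1 %% n) == i).

Definition path_rel (t : nat) : rel 'I_t :=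
  fun i j => (i.+1 == j) || (j.+1 == i).

Definition contains_induced (T U : finType) (e : rel T) (h : rel U) : Prop :=
  exists f : U -> T, injective f /\
    forall x y : U, x != y -> e (f x) (f y) = h x y.

Definition H_free (T U : finType) (e : rel T) (h : rel U) : Prop :=
  ~ contains_induced e h.

Definition independent (T : finType) (e : rel T) (N : {set T}) : Prop :=
  forall x y, x \in N -> y \in N -> ~~ e x y.

Definition add_edges (T : finType) (e : rel T) (F : {set {set T}}) : rel T :=
  fun x y => e x y || ((x != y) && ([set x; y] \in F)).

Definition probe_H_free (T U : finType) (e : rel T) (h : rel U) : Prop :=
  exists (N : {set T}) (F : {set {set T}}),
    independent e N /\
    (forall A, A \in F -> (A \subset N) /\ #|A| = 2) /\
    H_free (add_edges e F) h.

Arguments cycle_rel n : clear implicits.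
Arguments path_rel t : clear implicits.

From mathcomp Require Import all_boot zify.
Set Implicit Arguments. Unset Strict Implicit.

(* An independent set of an odd cycle cannot alternate all the way round, so it
   misses two consecutive vertices.  Look at the six vertices w0, ..., w5 ending
   with them.  Among the pairs that could be added, only the chord w1 w3 matters:
   if it is added then w5 w4 w3 w1 w0 is an induced P_5 (w0 is not in N because
   w1 is), otherwise w5 w4 w3 w2 w1 is.

   For P_6, on C_(2l+1) with vertices 0, ..., 2l, let N be the even vertices
   below 2l and let F be all pairs of N.  Then N is a clique K, the vertices
   2l-1 and 2l form a clique S, and every other vertex has all its neighbours
   in K.  Let p0, ..., p5 be an induced P_6.  An interior vertex p_i outside
   K and S would have its two non-adjacent neighbours in K, which is impossible.
   Each of the non-adjacent triples {p0, p2, p4} and {p1, p3, p5} meets K and S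
   at most once each, so it has a vertex outside both; that vertex must then be
   p0, resp. p5.  Hence p1 and p4 both lie in K although they are not adjacent. *)

Lemma cycle_relE n (x y : 'I_n) :
  cycle_rel n x y = [|| x.+1 == y :> nat, (x.+1 == n) && (y == 0 :> nat),
                        y.+1 == x :> nat | (y.+1 == n) && (x == 0 :> nat)].
Proof.
have succ_mod (z w : 'I_n) :
    (z.+1 %% n == w) = (z.+1 == w :> nat) || (z.+1 == n) && (w == 0 :> nat).
  case: (ltnP z.+1 n) => [zn | nz].
    by rewrite modn_small // (ltn_eqF zn) andFb orbF.
  have -> : z.+1 = n by apply/eqP; rewrite eqn_leq nz ltn_ord.
  by rewrite modnn (gtn_eqF (ltn_ord w)) eqxx eq_sym.
by rewrite /cycle_rel !succ_mod -!orbA.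
Qed.

Section CycleVertices.

Variables (n : nat) (n_gt0 : 0 < n).

Definition cvert (k : nat) : 'I_n := Ordinal (ltn_pmod k n_gt0).

Lemma modnS_mod k : (k %% n).+1 %% n = k.+1 %% n.
Proof. by rewrite -[in RHS]addn1 -modnDml addn1. Qed.

Lemma cvert_mod k : cvert (cvert k) = cvert k.
Proof. by apply: val_inj; rewrite /= modn_mod. Qed.

Lemma cvertS_mod k : cvert (cvert k).+1 = cvert k.+1.
Proof. by apply: val_inj; rewrite /= modnS_mod. Qed.

Lemma cvertDn k : cvert (k + n) = cvert k.
Proof. by apply: val_inj; rewrite /= modnDr. Qed.

Lemma cycle_rel_cvertS k : cycle_rel n (cvert k) (cvert k.+1).
Proof. by rewrite /cycle_rel /= modnS_mod eqxx. Qed.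

Lemma cvertD_eq u i j : i < n -> j < n -> (cvert (u + i) == cvert (u + j)) = (i == j).
Proof. by move=> lt_in lt_jn; rewrite -val_eqE /= eqn_modDl !modn_small. Qed.

Lemma cycle_rel_cvertD u i j : i.+1 < n -> j.+1 < n ->
  cycle_rel n (cvert (u + i)) (cvert (u + j)) = (i.+1 == j) || (j.+1 == i).
Proof.
move=> lt_in lt_jn; rewrite /cycle_rel /= !modnS_mod -!addnS !eqn_modDl.
by rewrite !modn_small // ltnW.
Qed.

Lemma odd_cycle_independent_gap (N : {set 'I_n}) :
  odd n -> independent (cycle_rel n) N ->
  exists k, (cvert k \notin N) && (cvert k.+1 \notin N).
Proof.
move=> odd_n N_indep.
case: (pickP [pred k : 'I_n | (cvert k \notin N) && (cvert k.+1 \notin N)]).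
  by move=> k gap; exists k.
move=> no_gap; exfalso.
have alternate k : (cvert k.+1 \in N) = ~~ (cvert k \in N).
  have := no_gap (cvert k); rewrite /= cvert_mod cvertS_mod.
  have := N_indep (cvert k) (cvert k.+1); rewrite cycle_rel_cvertS.
  by case: (cvert k \in N); case: (cvert k.+1 \in N) => // /(_ isT isT).
have parity k : (cvert k \in N) = (cvert 0 \in N) (+) odd k.
  by elim: k => [|k IHk]; rewrite ?addbF // alternate IHk /= addbN.
by have := parity (0 + n); rewrite cvertDn odd_n addbT; case: (_ \in N).
Qed.

End CycleVertices.

Lemma contains_induced_pathP (T : finType) (G : rel T) t :
  contains_induced G (path_rel t.+1) <->
  exists g : nat -> T, {in gtn t.+1 &, injective g} /\
    forall i j, i <= t -> j <= t -> i != j -> G (g i) (g j) = (i.+1 == j) || (j.+1 == i).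
Proof.
split=> [[f [f_inj f_path]] | [g [g_inj g_path]]].
  exists (fun k => f (inord k)); split.
    by move=> i j i_lt j_lt /f_inj/(congr1 val); rewrite /= !inordK.
  move=> i j i_le j_le ij.
  by rewrite f_path /path_rel ?inordK // -val_eqE /= !inordK.
exists (fun i : 'I_t.+1 => g i); split.
  by move=> i j /g_inj gij; apply: val_inj; apply: gij; rewrite inE.
by move=> i j ij; apply: g_path (ltn_ord i) (ltn_ord j) ij.
Qed.

Section AddEdges.

Variables (T : finType) (e : rel T) (N : {set T}).

Lemma pair_notin_outside (F : {set {set T}}) x y :
  (forall A, A \in F -> A \subset N) -> (x \notin N) || (y \notin N) ->
  ([set x; y] \in F) = false.
Proof.
rewrite -negb_and => F_sub; apply: contraNF => /F_sub.
by rewrite subUset !sub1set => /andP[-> ->].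
Qed.

Lemma add_edges_outside (F : {set {set T}}) x y :
  (forall A, A \in F -> A \subset N) -> (x \notin N) || (y \notin N) ->
  add_edges e F x y = e x y.
Proof.
by move=> F_sub xy_out; rewrite /add_edges pair_notin_outside // andbF orbF.
Qed.

Definition pairs_of : {set {set T}} := [set A : {set T} | (A \subset N) && (#|A| == 2)].

Lemma pairs_ofP A : A \in pairs_of -> A \subset N /\ #|A| = 2.
Proof. by rewrite inE => /andP[? /eqP]. Qed.

Lemma add_edges_pairs_of x y : x != y -> x \in N -> y \in N -> add_edges e pairs_of x y.
Proof.
move=> xy xN yN; rewrite /add_edges xy inE cards2 xy subUset !sub1set xN yN.
by rewrite orbT.
Qed.

End AddEdges.

Section OddCycleWindow.

Variables (n : nat) (n_gt0 : 0 < n) (N : {set 'I_n}) (F : {set {set 'I_n}}).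
Variable u : nat.
Hypothesis n_gt6 : 6 < n.
Hypothesis N_indep : independent (cycle_rel n) N.
Hypothesis F_sub : forall A, A \in F -> A \subset N.

Let w a := cvert n_gt0 (u + a).
Let G := add_edges (cycle_rel n) F.

Lemma window_inj : {in gtn 6 &, injective w}.
Proof.
move=> a b; rewrite !inE => a6 b6 /eqP.
by rewrite /w cvertD_eq => [/eqP||]; lia.
Qed.

Lemma window_edge a b : a < 6 -> b < 6 -> a != b ->
  G (w a) (w b) = [|| a.+1 == b, b.+1 == a | [set w a; w b] \in F].
Proof.
move=> a6 b6 ab.
by rewrite /G /add_edges /w cycle_rel_cvertD ?cvertD_eq ?ab -?orbA //; lia.
Qed.

Lemma window_nth_inj (s : seq nat) : uniq s -> all (gtn 6) s ->
  {in gtn (size s) &, injective (fun i => w (nth 0 s i))}.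
Proof.
move=> s_uniq /allP s6 i j; rewrite !inE => i_lt j_lt /window_inj.
rewrite !inE => /(_ (s6 _ (mem_nth 0 i_lt)) (s6 _ (mem_nth 0 j_lt)))/eqP.
by rewrite nth_uniq // => /eqP.
Qed.

Hypotheses (out4 : w 4 \notin N) (out5 : w 5 \notin N).

Lemma window_induced_P5 : contains_induced G (path_rel 5).
Proof.
have pairF x y : (x \notin N) || (y \notin N) -> ([set x; y] \in F) = false.
  exact: pair_notin_outside.
apply/contains_induced_pathP.
case chord : ([set w 1; w 3] \in F).
- have in1 : w 1 \in N by have := F_sub chord; rewrite subUset !sub1set => /andP[].
  have out0 : w 0 \notin N.
    by apply/negP => in0; move: (N_indep in0 in1); rewrite /w cycle_rel_cvertD //; lia.
  have chord' : [set w 3; w 1] \in F by rewrite setUC.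
  exists (fun i => w (nth 0 [:: 5; 4; 3; 1; 0] i)).
  split; first exact: (window_nth_inj (s := [:: 5; 4; 3; 1; 0])).
  case=> [|[|[|[|[|i]]]]] [|[|[|[|[|j]]]]] //= _ _ _;
    by rewrite window_edge //= ?chord ?chord' ?pairF ?out0 ?out4 ?out5 ?orbT.
- have chord' : ([set w 3; w 1] \in F) = false by rewrite setUC chord.
  exists (fun i => w (nth 0 [:: 5; 4; 3; 2; 1] i)).
  split; first exact: (window_nth_inj (s := [:: 5; 4; 3; 2; 1])).
  case=> [|[|[|[|[|i]]]]] [|[|[|[|[|j]]]]] //= _ _ _;
    by rewrite window_edge //= ?chord ?chord' ?pairF ?out4 ?out5 ?orbT.
Qed.

End OddCycleWindow.

Lemma odd_cycle_not_probe_P5_free n :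
  odd n -> 6 < n -> ~ probe_H_free (cycle_rel n) (path_rel 5).
Proof.
move=> odd_n n_gt6 [N [F [N_indep [F_pairs P5_free]]]]; apply: P5_free.
have n_gt0 : 0 < n by apply: ltn_trans n_gt6.
have F_sub A : A \in F -> A \subset N by case/F_pairs.
have [k /andP[k_out k1_out]] := odd_cycle_independent_gap n_gt0 odd_n N_indep.
apply: (window_induced_P5 (u := k + (n - 4)) n_gt6 N_indep F_sub).
  by rewrite -addnA subnK ?cvertDn //; lia.
by rewrite (_ : _ + 5 = k.+1 + n) ?cvertDn //; lia.
Qed.

Section SplitP6Free.

Variables (T : finType) (e : rel T) (K S : {pred T}).
Hypothesis K_clique : {in K &, forall x y, x != y -> e x y}.
Hypothesis S_clique : {in S &, forall x y, x != y -> e x y}.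
Hypothesis outside_nbhs_in_K :
  forall x y, x != y -> x \notin K -> x \notin S -> e x y -> y \in K.

Let inKS x := (x \in K) || (x \in S).

Section InducedP6.

Variable p : nat -> T.
Hypothesis p_inj : {in gtn 6 &, injective p}.
Hypothesis p_edge :
  forall a b, a <= 5 -> b <= 5 -> a != b -> e (p a) (p b) = (a.+1 == b) || (b.+1 == a).

Lemma induced_P6_neq a b : a < 6 -> b < 6 -> a != b -> p a != p b.
Proof. by move=> a6 b6; apply: contra => /eqP/p_inj; rewrite !inE => /(_ a6 b6) ->. Qed.

Lemma induced_P6_apart a b : a.+1 < b < 6 ->
  ~~ ((p a \in K) && (p b \in K)) && ~~ ((p a \in S) && (p b \in S)).
Proof.
move=> ab6; have [a6 b6 ab] : [/\ a < 6, b < 6 & a != b] by split; lia.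
have /negbT nadj : e (p a) (p b) = false by rewrite p_edge //; lia.
apply/andP; split; apply/andP => -[pa pb]; move/negP: nadj; apply.
  exact: K_clique (induced_P6_neq a6 b6 ab).
exact: S_clique (induced_P6_neq a6 b6 ab).
Qed.

Lemma induced_P6_spread a b c : a.+1 < b -> b.+1 < c < 6 ->
  ~~ [&& inKS (p a), inKS (p b) & inKS (p c)].
Proof.
move=> ab /andP[bc c6].
have [ab6 bc6 ac6] : [/\ a.+1 < b < 6, b.+1 < c < 6 & a.+1 < c < 6] by split; lia.
move: (induced_P6_apart ab6) (induced_P6_apart bc6) (induced_P6_apart ac6).
rewrite /inKS; move: (p a \in K) (p a \in S) (p b \in K) (p b \in S) (p c \in K) (p c \in S).
by do 6!case.
Qed.

Lemma induced_P6_nbr_in_K a b : a < 6 -> b < 6 -> (a.+1 == b) || (b.+1 == a) ->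
  ~~ inKS (p a) -> p b \in K.
Proof.
move=> a6 b6 ab; rewrite negb_or => /andP[aK aS].
have a_neq_b : a != b by lia.
by apply: (outside_nbhs_in_K _ aK aS); rewrite ?induced_P6_neq ?p_edge //; lia.
Qed.

Lemma induced_P6_interior a : 0 < a < 5 -> inKS (p a).
Proof.
move=> a15; apply: contraT => a_out.
have around : a.-1.+1 < a.+1 < 6 by lia.
by move: (induced_P6_apart around); rewrite !(induced_P6_nbr_in_K (a := a)) //; lia.
Qed.

End InducedP6.

Lemma split_P6_free : H_free e (path_rel 6).
Proof.
case/contains_induced_pathP=> p [p_inj p_edge].
have inner := induced_P6_interior p_inj p_edge.
have nbr_in_K := induced_P6_nbr_in_K p_inj p_edge.
have out0 : ~~ inKS (p 0).
  have := induced_P6_spread p_inj p_edge (isT : 1 < 2) (isT : 3 < 4 < 6).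
  by rewrite (inner 2) ?(inner 4) // !andbT.
have out5 : ~~ inKS (p 5).
  have := induced_P6_spread p_inj p_edge (isT : 2 < 3) (isT : 4 < 5 < 6).
  by rewrite (inner 1) ?(inner 3).
move: (induced_P6_apart p_inj p_edge (isT : 2 < 4 < 6)).
by rewrite (nbr_in_K 0 1) ?(nbr_in_K 5 4).
Qed.

End SplitP6Free.

Lemma odd_cycle_probe_P6_free l : probe_H_free (cycle_rel (2 * l + 1)) (path_rel 6).
Proof.
pose N := [set v : 'I_(2 * l + 1) | ~~ odd v && (v < 2 * l)].
have inN v : (v \in N) = ~~ odd v && (v < 2 * l) by rewrite inE.
have pairs_sub A : A \in pairs_of N -> A \subset N by case/pairs_ofP.
have v_le (v : 'I_(2 * l + 1)) : v <= 2 * l by have := ltn_ord v; lia.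
exists N, (pairs_of N); split; [|split].
- by move=> x y; rewrite !inN cycle_relE; lia.
- by move=> A /pairs_ofP.
apply: (split_P6_free (K := N) (S := [pred v : 'I_(2 * l + 1) | 2 * l <= v.+1])).
- by move=> x y xN yN xy; apply: add_edges_pairs_of.
- move=> x y; rewrite !inE => xS yS xy; rewrite /add_edges cycle_relE; apply/orP; left.
  by move: xy (v_le x) (v_le y); rewrite -val_eqE /=; lia.
- move=> x y xy xN xS; rewrite (add_edges_outside _ pairs_sub) ?xN // cycle_relE inN.
  by move: xN xS; rewrite inN !inE; have := v_le y; lia.
Qed.

Theorem mainTheorem9 (l : nat) : 3 <= l ->
  ~ probe_H_free (cycle_rel (2 * l + 1)) (path_rel 5) /\
  probe_H_free (cycle_rel (2 * l + 1)) (path_rel 6).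
Proof.
move=> l_ge3; split; last exact: odd_cycle_probe_P6_free.
by apply: odd_cycle_not_probe_P5_free; lia.
Qed.
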